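(* Let $k\equiv\pm2,\pm4\pmod{10}$. Then $\operatorname{Ker}\nu_{G^k}=\{M=\begin{pmatrix} a&b\\ c&d\end{pmatrix}\in\Gamma_{\theta,5}: (b,c\in5\mathbb{Z}\text{ and }\tfrac b5\equiv\tfrac c5\pmod5)\text{ or }(a,d\in5\mathbb{Z}\text{ and }\tfrac a5\equiv-\tfrac d5\pmod5)\}$; in particular $\operatorname{Ker}\nu_{G^k}=\operatorname{Ker}\nu_{F^k}$.
   Context: $\Gamma_{\theta,5}=\{M\in SL(2,\mathbb{Z}): M\equiv\pm\begin{pmatrix}1&0\\0&1\end{pmatrix}\text{ or }\pm\begin{pmatrix}0&-1\\1&0\end{pmatrix}\pmod 5\}$. For $M=\begin{pmatrix} a&b\\ c&d\end{pmatrix}\in\Gamma_{\theta,5}$ define $g(M)=\frac{6b}{5}+\frac{2ab}{5}+\frac{2cd}{5}$ if $M\equiv I$, $\frac{24b}{5}+\frac{2ab}{5}+\frac{2cd}{5}$ if $M\equiv -I$, $5+\frac{6d}{5}+\frac{2ab}{5}+\frac{2cd}{5}$ if $M\equiv\begin{pmatrix}0&-1\\1&0\end{pmatrix}$, $5-\frac{6d}{5}+\frac{2ab}{5}+\frac{2cd}{5}$ if $M\equiv\begin{pmatrix}0&1\\-1&0\end{pmatrix}$ (all mod 5), and $f(M)$ by the same case split with values $\frac{4b}{5}+\frac{8ab}{5}+\frac{8cd}{5}$, $\frac{6b}{5}+\frac{8ab}{5}+\frac{8cd}{5}$, $5+\frac{4d}{5}+\frac{8ab}{5}+\frac{8cd}{5}$,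 $5-\frac{4d}{5}+\frac{8ab}{5}+\frac{8cd}{5}$ respectively. For $k\in\mathbb{Z}$, $\nu_{G^k}(M)=\exp(\frac{\pi ik}{5}g(M))$ and $\nu_{F^k}(M)=\exp(\frac{\pi ik}{5}f(M))$; these are the multiplier systems (weight $2k$) of $G^k$ and $F^k$, where $G=\eta^6/\big(\theta\begin{bmatrix}3/5\\3/5\end{bmatrix}\theta\begin{bmatrix}3/5\\7/5\end{bmatrix}\big)$, $F=\eta^6/\big(\theta\begin{bmatrix}1/5\\1/5\end{bmatrix}\theta\begin{bmatrix}1/5\\9/5\end{bmatrix}\big)$, with theta constants $\theta\begin{bmatrix}\epsilon\\ \epsilon'\end{bmatrix}=\sum_{n\in\mathbb{Z}}\exp(2\pi i[\frac12(n+\frac\epsilon2)^2\tau+(n+\frac\epsilon2)\frac{\epsilon'}2])$ and $\eta(\tau)=q^{1/24}\prod_{n\ge1}(1-q^n)$. Kernels are $\{M\in\Gamma_{\theta,5}:\nu(M)=1\}$. *)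

From Stdlib Require Import ZArith Reals.
From Coquelicot Require Import Coquelicot.
Open Scope R_scope.

Definition expi (t : R) : C := (cos t, sin t).

Definition inSL2Z (a b c d : Z) : Prop := (a * d - b * c)%Z = 1%Z.

Definition cong5 (x y : Z) : Prop := (x mod 5 = y mod 5)%Z.

(* M == I, -I, S = (0 -1; 1 0), -S = (0 1; -1 0)  (mod 5) *)
Definition modI (a b c d : Z) : Prop := cong5 a 1 /\ cong5 b 0 /\ cong5 c 0 /\ cong5 d 1.
Definition modmI (a b c d : Z) : Prop := cong5 a (-1) /\ cong5 b 0 /\ cong5 c 0 /\ cong5 d (-1).
Definition modS (a b c d : Z) : Prop := cong5 a 0 /\ cong5 b (-1) /\ cong5 c 1 /\ cong5 d 0.
Definition modmS (a b c d : Z) : Prop := cong5 a 0 /\ cong5 b 1 /\ cong5 c (-1) /\ cong5 d 0.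

Definition in_Gamma_theta5 (a b c d : Z) : Prop :=
  inSL2Z a b c d /\
  (modI a b c d \/ modmI a b c d \/ modS a b c d \/ modmS a b c d).

Definition cong5b (x y : Z) : bool := Z.eqb (x mod 5) (y mod 5).
Definition modIb (a b c d : Z) : bool := cong5b a 1 && cong5b b 0 && cong5b c 0 && cong5b d 1.
Definition modmIb (a b c d : Z) : bool := cong5b a (-1) && cong5b b 0 && cong5b c 0 && cong5b d (-1).
Definition modSb (a b c d : Z) : bool := cong5b a 0 && cong5b b (-1) && cong5b c 1 && cong5b d 0.

(* g(M); the last branch is the case M == (0 1; -1 0) mod 5
   (on Gamma_{theta,5} the four cases are exhaustive and disjoint) *)
Definition g_mult (a b c d : Z) : R :=
  let A := IZR a in let B := IZR b in let Cc := IZR c in let D := IZR d in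
  if modIb a b c d then 6 * B / 5 + 2 * A * B / 5 + 2 * Cc * D / 5
  else if modmIb a b c d then 24 * B / 5 + 2 * A * B / 5 + 2 * Cc * D / 5
  else if modSb a b c d then 5 + 6 * D / 5 + 2 * A * B / 5 + 2 * Cc * D / 5
  else 5 - 6 * D / 5 + 2 * A * B / 5 + 2 * Cc * D / 5.

Definition f_mult (a b c d : Z) : R :=
  let A := IZR a in let B := IZR b in let Cc := IZR c in let D := IZR d in
  if modIb a b c d then 4 * B / 5 + 8 * A * B / 5 + 8 * Cc * D / 5
  else if modmIb a b c d then 6 * B / 5 + 8 * A * B / 5 + 8 * Cc * D / 5
  else if modSb a b c d then 5 + 4 * D / 5 + 8 * A * B / 5 + 8 * Cc * D / 5
  else 5 - 4 * D / 5 + 8 * A * B / 5 + 8 * Cc * D / 5.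

Definition nu_G (k : Z) (a b c d : Z) : C := expi (PI * IZR k * g_mult a b c d / 5).
Definition nu_F (k : Z) (a b c d : Z) : C := expi (PI * IZR k * f_mult a b c d / 5).

Definition in_Ker_nu_G (k a b c d : Z) : Prop := in_Gamma_theta5 a b c d /\ nu_G k a b c d = 1%C.
Definition in_Ker_nu_F (k a b c d : Z) : Prop := in_Gamma_theta5 a b c d /\ nu_F k a b c d = 1%C.

Definition kernel_set (a b c d : Z) : Prop :=
  in_Gamma_theta5 a b c d /\
  (((5 | b)%Z /\ (5 | c)%Z /\ cong5 (b / 5) (c / 5)) \/
   ((5 | a)%Z /\ (5 | d)%Z /\ cong5 (a / 5) (- (d / 5)))).

From Stdlib Require Import ZArith Znumtheory Reals Lia Lra.
From Coquelicot Require Import Coquelicot.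
Open Scope R_scope.

(* Both multipliers have the form exp(pi i k N / 25) with N = 5 g(M) (resp. 5 f(M)) an
   integer, so they equal 1 iff 50 | k N; as k is even and prime to 5, iff 25 | N.
   Writing M = (a b; c d) in its class mod 5, the products a b and c d have a factor
   divisible by 5, so they are determined mod 25 by the other factor's residue mod 5.
   This makes N linear mod 25 in the entries divisible by 5, and 25 | N becomes the
   stated congruence between b/5 and c/5 (classes +-I) or a/5 and -d/5 (classes +-S),
   the same condition for g and for f. *)

Lemma expi_eq_1 (t : R) : expi t = 1%C <-> exists n : Z, t = 2 * PI * IZR n.
Proof.
  unfold expi; split.
  - intros H; injection H as Hcos _.
    assert (Hhalf : sin (t / 2) = 0).
    { assert (Hsq : sin (t / 2) * sin (t / 2) = 0).
      { pose proof (cos_2a_sin (t / 2)) as E.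
        replace (2 * (t / 2)) with t in E by field. lra. }
      destruct (Rmult_integral _ _ Hsq); assumption. }
    destruct (sin_eq_0_0 _ Hhalf) as [n Hn].
    exists n; lra.
  - intros [n ->].
    assert (Hsin : sin (IZR n * PI) = 0) by (apply sin_eq_0_1; exists n; reflexivity).
    replace (2 * PI * IZR n) with (2 * (IZR n * PI)) by ring.
    rewrite sin_2a, cos_2a_sin, Hsin.
    unfold RtoC; f_equal; ring.
Qed.

Lemma expi_eq_1_iff_divide (k N : Z) :
  expi (PI * IZR k * (IZR N / 5) / 5) = 1%C <-> (50 | k * N)%Z.
Proof.
  rewrite expi_eq_1.
  pose proof PI_RGT_0 as HPI.
  split.
  - intros [n Hn]; exists n.
    apply eq_IZR; rewrite !mult_IZR.
    apply (Rmult_eq_reg_l (PI / 25)); [| lra].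
    transitivity (PI * IZR k * (IZR N / 5) / 5); [field | rewrite Hn; field].
  - intros [n Hn]; exists n.
    apply (f_equal IZR) in Hn; rewrite !mult_IZR in Hn.
    transitivity (PI / 25 * (IZR k * IZR N)); [field | rewrite Hn; field].
Qed.

Open Scope Z_scope.

Lemma prime_5 : prime 5.
Proof.
  apply prime_alt; split; [lia |]. intros n Hn [q Hq].
  assert (n = 2 \/ n = 3 \/ n = 4) as [-> | [-> | ->]] by lia; lia.
Qed.

Lemma divide_50_mul_iff (k N : Z) : (2 | k) -> ~ (5 | k) -> (50 | k * N) <-> (25 | N).
Proof.
  intros [u ->] H5k.
  assert (H25u : rel_prime 25 u).
  { apply rel_prime_sym; change 25 with (5 * 5).
    assert (H5u : rel_prime u 5).
    { apply rel_prime_sym, prime_rel_prime; [exact prime_5 |].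
      intros Hu; apply H5k, Z.divide_mul_l, Hu. }
    apply rel_prime_mult; exact H5u. }
  split.
  - intros [q Hq]. apply (Gauss 25 u N); [exists q; lia | exact H25u].
  - intros [q ->]. exists (u * q). ring.
Qed.

Lemma even_not_divide_5_of_mod10 (k : Z) :
  k mod 10 = 2 \/ k mod 10 = 4 \/ k mod 10 = 6 \/ k mod 10 = 8 -> (2 | k) /\ ~ (5 | k).
Proof.
  intros hk; split.
  - exists (k / 2). Z.div_mod_to_equations; lia.
  - intros [q ->]. Z.div_mod_to_equations; lia.
Qed.

Definition theta5_case {T : Type} (a b c d : Z) (xI xmI xS xmS : T) : T :=
  if modIb a b c d then xI else if modmIb a b c d then xmI
  else if modSb a b c d then xS else xmS.

Definition g_num (a b c d : Z) : Z :=
  theta5_case a b c d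
    (6 * b + 2 * (a * b) + 2 * (c * d)) (24 * b + 2 * (a * b) + 2 * (c * d))
    (25 + 6 * d + 2 * (a * b) + 2 * (c * d)) (25 - 6 * d + 2 * (a * b) + 2 * (c * d)).

Definition f_num (a b c d : Z) : Z :=
  theta5_case a b c d
    (4 * b + 8 * (a * b) + 8 * (c * d)) (6 * b + 8 * (a * b) + 8 * (c * d))
    (25 + 4 * d + 8 * (a * b) + 8 * (c * d)) (25 - 4 * d + 8 * (a * b) + 8 * (c * d)).

Lemma g_mult_num (a b c d : Z) : g_mult a b c d = (IZR (g_num a b c d) / 5)%R.
Proof.
  unfold g_mult, g_num, theta5_case; cbv zeta.
  destruct (modIb a b c d), (modmIb a b c d), (modSb a b c d);
    rewrite ?plus_IZR, ?minus_IZR, ?mult_IZR; field.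
Qed.

Lemma f_mult_num (a b c d : Z) : f_mult a b c d = (IZR (f_num a b c d) / 5)%R.
Proof.
  unfold f_mult, f_num, theta5_case; cbv zeta.
  destruct (modIb a b c d), (modmIb a b c d), (modSb a b c d);
    rewrite ?plus_IZR, ?minus_IZR, ?mult_IZR; field.
Qed.

Section Theta5Cases.
Context {T : Type} {a b c d : Z} (xI xmI xS xmS : T).

Ltac eval_case := intros [Ha [Hb [Hc Hd]]];
  unfold cong5 in *; unfold theta5_case, modIb, modmIb, modSb, cong5b;
  rewrite Ha, Hb, Hc, Hd; reflexivity.

Lemma theta5_case_I : modI a b c d -> theta5_case a b c d xI xmI xS xmS = xI.
Proof. eval_case. Qed.

Lemma theta5_case_mI : modmI a b c d -> theta5_case a b c d xI xmI xS xmS = xmI.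
Proof. eval_case. Qed.

Lemma theta5_case_S : modS a b c d -> theta5_case a b c d xI xmI xS xmS = xS.
Proof. eval_case. Qed.

Lemma theta5_case_mS : modmS a b c d -> theta5_case a b c d xI xmI xS xmS = xmS.
Proof. eval_case. Qed.

End Theta5Cases.

Definition kernel_cond (a b c d : Z) : Prop :=
  ((5 | b) /\ (5 | c) /\ cong5 (b / 5) (c / 5)) \/
  ((5 | a) /\ (5 | d) /\ cong5 (a / 5) (- (d / 5))).

Lemma cong5_divide (x y : Z) : cong5 x y -> (5 | x - y).
Proof. intros H; apply Z.mod_divide; [lia |]; apply Z.cong_iff_0, H. Qed.

Lemma cong5_mul_divide_25 (x y z : Z) : cong5 x y -> cong5 z 0 -> (25 | x * z - y * z).
Proof.
  intros Hxy Hz.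
  destruct (cong5_divide _ _ Hxy) as [u Hu], (cong5_divide _ _ Hz) as [v Hv].
  exists (u * v). replace (x * z - y * z) with ((x - y) * (z - 0)) by ring.
  rewrite Hu, Hv; ring.
Qed.

Ltac solve_mod25 :=
  unfold kernel_cond, cong5 in *; rewrite <- ?Z.mod_divide in * by lia;
  Z.div_mod_to_equations; lia.

Lemma divide_25_num_iff_kernel_cond (a b c d : Z) : in_Gamma_theta5 a b c d ->
  ((25 | g_num a b c d) <-> kernel_cond a b c d) /\
  ((25 | f_num a b c d) <-> kernel_cond a b c d).
Proof.
  intros [_ [H | [H | [H | H]]]]; unfold g_num, f_num.
  - rewrite (theta5_case_I _ _ _ _ H), (theta5_case_I _ _ _ _ H).
    destruct H as [Ha [Hb [Hc Hd]]].
    pose proof (cong5_mul_divide_25 a 1 b Ha Hb).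
    pose proof (cong5_mul_divide_25 d 1 c Hd Hc).
    split; solve_mod25.
  - rewrite (theta5_case_mI _ _ _ _ H), (theta5_case_mI _ _ _ _ H).
    destruct H as [Ha [Hb [Hc Hd]]].
    pose proof (cong5_mul_divide_25 a (-1) b Ha Hb).
    pose proof (cong5_mul_divide_25 d (-1) c Hd Hc).
    split; solve_mod25.
  - rewrite (theta5_case_S _ _ _ _ H), (theta5_case_S _ _ _ _ H).
    destruct H as [Ha [Hb [Hc Hd]]].
    pose proof (cong5_mul_divide_25 b (-1) a Hb Ha).
    pose proof (cong5_mul_divide_25 c 1 d Hc Hd).
    split; solve_mod25.
  - rewrite (theta5_case_mS _ _ _ _ H), (theta5_case_mS _ _ _ _ H).
    destruct H as [Ha [Hb [Hc Hd]]].
    pose proof (cong5_mul_divide_25 b 1 a Hb Ha).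
    pose proof (cong5_mul_divide_25 c (-1) d Hc Hd).
    split; solve_mod25.
Qed.

Close Scope Z_scope.

Theorem mainTheorem12 (k : Z)
  (hk : (k mod 10 = 2 \/ k mod 10 = 4 \/ k mod 10 = 6 \/ k mod 10 = 8)%Z) :
  (forall a b c d : Z, in_Ker_nu_G k a b c d <-> kernel_set a b c d) /\
  (forall a b c d : Z, in_Ker_nu_G k a b c d <-> in_Ker_nu_F k a b c d).
Proof.
  destruct (even_not_divide_5_of_mod10 k hk) as [H2k H5k].
  assert (Hker : forall a b c d, in_Gamma_theta5 a b c d ->
    (nu_G k a b c d = 1%C <-> kernel_cond a b c d) /\
    (nu_F k a b c d = 1%C <-> kernel_cond a b c d)).
  { intros a b c d HGamma; unfold nu_G, nu_F.
    rewrite g_mult_num, f_mult_num, !expi_eq_1_iff_divide,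
      !(divide_50_mul_iff k) by assumption.
    exact (divide_25_num_iff_kernel_cond a b c d HGamma). }
  unfold in_Ker_nu_G, in_Ker_nu_F, kernel_set.
  split; intros a b c d; split; intros [HGamma Hnu]; split; try exact HGamma;
    destruct (Hker a b c d HGamma) as [EG EF]; unfold kernel_cond in *; tauto.
Qed.
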